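(* Let $G$ be a connected graph with $\dim(G)=n(G)-2\ge 2$, and let $\ell\ge 1$ be an integer. Then $D(G)=n(G)-\ell$ if and only if $G$ is isomorphic to one of the following graphs: (a) $K_{\ell+1,\ell+1}$; (b) $K_{t,\ell}$ with $t\ge \ell+1$; (c) $K_\ell+\overline{K_t}$ with $t\ge \ell$; (d) $K_t+\overline{K_\ell}$ with $t\ge \ell\ge 2$; (e) $K_{\ell-1}+(K_t\cup K_1)$ with $t\ge \max\{2,\ell-1\}$; (f) $K_t+(K_{\ell-1}\cup K_1)$ with $t\ge\max\{2,\ell-1\}$.
   Context: All graphs are finite and simple; $n(G)=|V(G)|$. For a connected graph $G$ with shortest-path distance $d_G$, a set $S\subseteq V(G)$ is resolving if for any two distinct vertices $x,y$ there is $s\in S$ with $d_G(x,s)\neq d_G(y,s)$; the metric dimension $\dim(G)$ is the minimum size of a resolving set. A distinguishing coloring of a graph $G$ is a (not necessarily proper) vertex coloring such that the only automorphism of $G$ mapping every vertex to a vertex of the same color is the identity; the distinguishing number $D(G)$ is the minimum number of colors in a distinguishing coloring of $G$. $K_{s,t}$ is the complete bipartite graph, $\overline{K_t}$ the edgeless graph on $t$ vertices, $G\cup H$ the disjoint union, and the join $G+H$ is obtained from $G\cup H$ by adding all edges between $V(G)$ and $V(H)$. *)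

From mathcomp Require Import all_boot all_fingroup.
Set Implicit Arguments. Unset Strict Implicit. Unset Printing Implicit Defensive.

(* A finite graph: a vertex finType with an adjacency relation.
   Simple graphs: symmetric and irreflexive relations. *)
Record fgraph := FGraph { vert : finType; adj : rel vert }.

Section Graphs.
Variables (T : finType) (e : rel T).

Definition connected_graph : Prop := forall x y : T, connect e x y.

Definition walkn (n : nat) (x y : T) : bool :=
  [exists p : n.-tuple T, path e x p && (last x p == y)].

(* shortest-path distance: least n with a walk of length n from x to y
   (equals #|T| if y is unreachable from x; irrelevant for connected graphs) *)
Definition gdist (x y : T) : nat := find (fun n => walkn n x y) (iota 0 #|T|).

Definition resolving (S : {set T}) : bool :=
  [forall x, forall y, (x != y) ==> [exists s in S, gdist x s != gdist y s]].

Definition metric_dim : nat :=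
  find (fun n => [exists S : {set T}, (#|S| == n) && resolving S]) (iota 0 #|T|.+1).

Definition is_aut (p : {perm T}) : bool :=
  [forall x, forall y, e (p x) (p y) == e x y].

Definition distinguishing (k : nat) (c : {ffun T -> 'I_k}) : bool :=
  [forall p : {perm T}, (is_aut p && [forall x, c (p x) == c x]) ==> (p == 1%g)].

Definition dist_number : nat :=
  find (fun k => [exists c : {ffun T -> 'I_k}, distinguishing c]) (iota 0 #|T|.+1).

Definition isomorphic (G : fgraph) : Prop :=
  exists f : T -> vert G, bijective f /\ forall x y, @adj G (f x) (f y) = e x y.

End Graphs.

Definition Kn (t : nat) : fgraph := @FGraph 'I_t (fun x y => x != y).
Definition Kbar (t : nat) : fgraph := @FGraph 'I_t (fun _ _ => false).

Definition sum_rel (G H : fgraph) (cross : bool) : rel (vert G + vert H) :=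
  fun u v => match u, v with
  | inl x, inl y => @adj G x y
  | inr x, inr y => @adj H x y
  | _, _ => cross
  end.

Definition gunion (G H : fgraph) : fgraph := @FGraph (vert G + vert H)%type (@sum_rel G H false).
Definition gjoin (G H : fgraph) : fgraph := @FGraph (vert G + vert H)%type (@sum_rel G H true).
Definition Kbip (s t : nat) : fgraph := gjoin (Kbar s) (Kbar t).

From Pilot Require Import Defs.
From mathcomp Require Import all_boot all_fingroup.
From mathcomp Require Import zify.
Set Implicit Arguments. Unset Strict Implicit. Unset Printing Implicit Defensive.

(* Since dim(G) = n - 2, no set of n - 3 vertices resolves G: among any three vertices two
   have the same distances to all other vertices, hence are twins once the third is deleted;
   and G has diameter 2.  A case analysis on the existence of a universal vertex then shows
   that G is K_(s,t), K_s + \bar K_t or K_s + (K_t \cup K_1) with t >= 2.  In each case the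
   vertex set splits into twin classes preserved by every automorphism.  Twins need distinct
   colours, and colouring every class injectively is distinguishing, so D(G) is the largest
   class size, except for K_(s,s), where swapping the sides costs one more colour.  Solving
   D(G) = n - l for the class sizes gives the six families. *)

Section FindIota.
Variables (P : pred nat) (N : nat).

Lemma find_iota_le k : P k -> find P (iota 0 N) <= k.
Proof.
move=> Pk; case: (ltnP k N) => [kN|Nk].
  by rewrite leqNgt; apply/negP => /(before_find 0); rewrite nth_iota // add0n Pk.
by apply: leq_trans Nk; have := find_size P (iota 0 N); rewrite size_iota.
Qed.

Lemma find_iota_sat : find P (iota 0 N) < N -> P (find P (iota 0 N)).
Proof.
move=> lt; have hasP : has P (iota 0 N) by rewrite has_find size_iota.
by have := nth_find 0 hasP; rewrite nth_iota.
Qed.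

Lemma find_iotaE k : k < N -> P k -> (forall j, j < k -> ~~ P j) ->
  find P (iota 0 N) = k.
Proof.
move=> kN Pk min; apply/eqP; rewrite eqn_leq find_iota_le //= leqNgt.
apply/negP => lt; have := find_iota_sat (leq_trans lt (ltnW kN)).
by rewrite (negbTE (min _ lt)).
Qed.

End FindIota.

Section FinsetFacts.
Variable T : finType.
Implicit Type A X : {set T}.

Lemma card_gt1_other X x : 1 < #|X| -> exists2 y, y \in X & y != x.
Proof.
move=> X2; have : 0 < #|X :\ x| by have := cardsD1 x X; case: (x \in X) => /=; lia.
by case/card_gt0P => y; rewrite !inE => /andP[yx yX]; exists y.
Qed.

Lemma in_setCD1 A c w : (w \in ~: A :\ c) = (w \notin A) && (w != c).
Proof. by rewrite !inE andbC. Qed.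

Lemma card_setCD1 A c : c \notin A -> #|~: A :\ c|.+1 = #|~: A|.
Proof. by move=> cA; rewrite (cardsD1 c (~: A)) inE cA. Qed.

Lemma onto_of_card_in_inj X k (c : T -> 'I_k) :
  #|X| = k -> {in X &, injective c} -> forall i, exists2 w, w \in X & c w = i.
Proof.
move=> cardX c_inj i; have : i \in c @: X.
  suff -> : c @: X = [set: 'I_k] by rewrite inE.
  by apply/eqP; rewrite eqEcard subsetT cardsT card_ord card_in_imset // cardX leqnn.
by case/imsetP => w wX ->; exists w.
Qed.

End FinsetFacts.

Section IndexIn.
Variable T : finType.
Implicit Type A : {set T}.

Definition index_in A v := index v (enum A).

Lemma index_in_lt A v : v \in A -> index_in A v < #|A|.
Proof. by move=> vA; rewrite /index_in cardE index_mem mem_enum. Qed.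

Lemma index_in_inj A : {in A &, injective (index_in A)}.
Proof.
move=> u v uA vA E.
by rewrite -(nth_index u (_ : u \in enum A)) ?mem_enum // -/(index_in A u) E nth_index ?mem_enum.
Qed.

Lemma index_in_nth A x0 i : i < #|A| -> index_in A (nth x0 (enum A) i) = i.
Proof. by move=> iA; rewrite /index_in index_uniq ?enum_uniq // -cardE. Qed.

Lemma nth_enum_in A x0 i : i < #|A| -> nth x0 (enum A) i \in A.
Proof. by move=> iA; rewrite -mem_enum mem_nth // -cardE. Qed.

End IndexIn.

Definition is_inl (S1 S2 : Type) (u : S1 + S2) := if u is inl _ then true else false.

Section InlSet.
Variables S1 S2 : finType.

Definition inl_set : {set S1 + S2} := [set u | is_inl u].

Lemma card_inl_set : #|inl_set| = #|S1|.
Proof.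
have -> : inl_set = inl @: [set: S1].
  apply/setP => -[x|y]; rewrite inE /=; first by apply/esym/imsetP; exists x; rewrite ?inE.
  by apply/esym/imsetP => -[x _].
by rewrite card_imset ?cardsT // => x y [].
Qed.

Lemma card_inl_setC : #|~: inl_set| = #|S2|.
Proof. by have := cardsC inl_set; rewrite card_inl_set card_sum => /addnI. Qed.

End InlSet.

Lemma path_cross (T : eqType) (e : rel T) (P : pred T) x p :
  path e x p -> ~~ P x -> P (last x p) -> exists u v, [/\ e u v, ~~ P u & P v].
Proof.
elim: p x => [|y p IH] x /=; first by move=> _ /negbTE->.
move=> /andP[exy pp] nPx; case Py: (P y); first by exists x, y; rewrite exy nPx.
by apply: IH => //; rewrite Py.
Qed.

Section Distance.
Variables (T : finType) (e : rel T).

Lemma walkn0 x y : walkn e 0 x y = (x == y).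
Proof.
apply/existsP/idP => [[p /andP[_ /eqP <-]]| /eqP <-]; first by rewrite tuple0.
by exists [tuple]; rewrite /= eqxx.
Qed.

Lemma walkn1 x y : walkn e 1 x y = e x y.
Proof.
apply/existsP/idP => [[p]|exy]; last by exists [tuple y]; rewrite /= exy eqxx.
by case: p => [[|a [|b s]]] //= _; rewrite andbT => /andP[exa /eqP <-].
Qed.

Lemma walkn2 x y : walkn e 2 x y = [exists z, e x z && e z y].
Proof.
apply/existsP/existsP => [[p]|[z /andP[exz ezy]]].
  case: p => [[|a [|b [|c s]]]] //= _; rewrite andbT => /andP[/andP[exa eab] /eqP Eb].
  by exists a; rewrite exa -Eb eab.
by exists [tuple z; y]; rewrite /= exz ezy eqxx.
Qed.

Lemma gdist_le k x y : walkn e k x y -> gdist e x y <= k.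
Proof. exact: find_iota_le. Qed.

Lemma walkn_gdist x y : gdist e x y < #|T| -> walkn e (gdist e x y) x y.
Proof. exact: find_iota_sat. Qed.

Lemma gdist_eq0 x y : (gdist e x y == 0) = (x == y).
Proof.
apply/eqP/eqP => [d0|<-]; last by apply/eqP; rewrite -leqn0 gdist_le ?walkn0.
have nT : 0 < #|T| by apply/card_gt0P; exists x.
by apply/eqP; rewrite -walkn0 -d0 walkn_gdist ?d0.
Qed.

Lemma gdist_eq1 x y : x != y -> (gdist e x y == 1) = e x y.
Proof.
move=> xy; have d0 : gdist e x y != 0 by rewrite gdist_eq0.
have nT : 1 < #|T| by apply/card_gt1P; exists x, y.
apply/eqP/idP => [d1|exy]; first by rewrite -walkn1 -d1 walkn_gdist ?d1.
have : gdist e x y <= 1 by apply: gdist_le; rewrite walkn1.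
by move: d0; clear; lia.
Qed.

(* [2 < #|T|] excludes the junk value [gdist e x y = #|T| = 2] of an unreachable pair. *)
Lemma gdist_eq2 x y : 2 < #|T| -> x != y -> ~~ e x y ->
  (gdist e x y == 2) = [exists z, e x z && e z y].
Proof.
move=> nT xy nxy; have d0 : gdist e x y != 0 by rewrite gdist_eq0.
have d1 : gdist e x y != 1 by rewrite gdist_eq1.
apply/eqP/idP => [d2|exy]; first by rewrite -walkn2 -d2 walkn_gdist ?d2.
have : gdist e x y <= 2 by apply: gdist_le; rewrite walkn2.
by move: d0 d1; clear; lia.
Qed.

Lemma gdist_id x : gdist e x x = 0.
Proof. by apply/eqP; rewrite gdist_eq0. Qed.

Definition unresolved_off (S : {set T}) x y :=
  forall s, s \notin S -> gdist e x s = gdist e y s.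

Lemma unresolved_offC S x y : unresolved_off S x y -> unresolved_off S y x.
Proof. by move=> h s sS; rewrite h. Qed.

Lemma unresolved_off_adj S x y v : unresolved_off S x y -> x \in S -> y \in S -> v \notin S ->
  e x v = e y v.
Proof.
move=> h xS yS vS; have xv : x != v by apply: contraNneq vS => <-.
have yv : y != v by apply: contraNneq vS => <-.
by rewrite -gdist_eq1 // -gdist_eq1 // h.
Qed.

Lemma resolvingT : resolving e [set: T].
Proof.
apply/forallP => x; apply/forallP => y; apply/implyP => xy.
apply/existsP; exists x; rewrite inE /=.
by rewrite gdist_id eq_sym gdist_eq0 eq_sym.
Qed.

Lemma metric_dim_le (S : {set T}) : resolving e S -> metric_dim e <= #|S|.
Proof. by move=> resS; apply: find_iota_le; apply/existsP; exists S; rewrite eqxx. Qed.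

Lemma metric_dimP : exists2 S : {set T}, #|S| = metric_dim e & resolving e S.
Proof.
have : metric_dim e < #|T|.+1 by rewrite ltnS -cardsT metric_dim_le ?resolvingT.
by move/find_iota_sat/existsP => [S /andP[/eqP cardS resS]]; exists S.
Qed.

End Distance.

Section Neighbourhoods.
Variables (T : finType) (e : rel T).

Definition twins x y := forall v, v != x -> v != y -> e x v = e y v.

Definition twinsb x y := [forall v, (v != x) ==> (v != y) ==> (e x v == e y v)].

Lemma twinsP x y : reflect (twins x y) (twinsb x y).
Proof.
apply: (iffP forallP) => [tw v vx vy|tw v].
  by move/implyP: (tw v) => /(_ vx)/implyP/(_ vy)/eqP.
by apply/implyP => vx; apply/implyP => vy; rewrite tw.
Qed.

Definition twins_off x y z := forall v, v != x -> v != y -> v != z -> e x v = e y v.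

Lemma twins_offC x y z : twins_off x y z -> twins_off y x z.
Proof. by move=> tw v vy vx vz; rewrite tw. Qed.

Definition universal x := [forall v, (v != x) ==> e x v].

Lemma universalP x : reflect (forall v, v != x -> e x v) (universal x).
Proof.
apply: (iffP forallP) => [ux v vx|ux v]; first by move/implyP: (ux v); apply.
by apply/implyP; apply: ux.
Qed.

Lemma universalPn x : reflect (exists w, w != x /\ ~~ e x w) (~~ universal x).
Proof.
apply: (iffP forallPn) => [[w]|[w [wx nxw]]]; last by exists w; rewrite negb_imply wx.
by rewrite negb_imply => /andP[wx nxw]; exists w.
Qed.

Lemma nonadj_nonuniversal x y : x != y -> ~~ e x y -> ~~ universal x.
Proof. by move=> xy nxy; apply/universalPn; exists y; rewrite eq_sym xy. Qed.

End Neighbourhoods.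

Section MetricDimNMinus2.
Variables (T : finType) (e : rel T).
Hypothesis esy : symmetric e.
Hypothesis eirr : irreflexive e.
Hypothesis econ : connected_graph e.
Hypothesis edim : metric_dim e = #|T| - 2.
Hypothesis edim2 : 2 <= metric_dim e.

Lemma card_gt3 : 3 < #|T|.
Proof. by move: edim2; rewrite edim; clear; lia. Qed.

Lemma not_complete : exists x y, x != y /\ ~~ e x y.
Proof.
have [S cardS resS] := metric_dimP e.
have : #|~: S| == 2 by have := cardsC S; have := card_gt3; rewrite cardS edim; lia.
case/cards2P => a [b [ab defC]].
move/forallP/(_ a)/forallP/(_ b): resS; rewrite ab => /existsP[s /andP[sS ds]].
have : s \notin [set a; b] by rewrite -defC inE negbK.
rewrite !inE negb_or => /andP[sa sb].
case eas: (e a s); last by exists a, s; rewrite eq_sym sa eas.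
case ebs: (e b s); last by exists b, s; rewrite eq_sym sb ebs.
have /eqP da : gdist e a s == 1 by rewrite gdist_eq1 // eq_sym.
have /eqP db : gdist e b s == 1 by rewrite gdist_eq1 // eq_sym.
by rewrite da db in ds.
Qed.

Lemma triple_unresolved a b c : a != b -> b != c -> a != c ->
  [\/ unresolved_off e [set a; b; c] a b, unresolved_off e [set a; b; c] a c
     | unresolved_off e [set a; b; c] b c].
Proof.
move=> ab bc ac.
have c3 : #|[set a; b; c]| = 3.
  by rewrite -setUA cardsU1 cards2 bc !inE negb_or ab ac.
have : ~~ resolving e (~: [set a; b; c]).
  apply/negP => /metric_dim_le; rewrite edim.
  by have := cardsC [set a; b; c]; have := card_gt3; rewrite c3; lia.
case/forallPn => x /forallPn [y]; rewrite negb_imply => /andP[xy /existsPn unres].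
have dxy : unresolved_off e [set a; b; c] x y.
  by move=> s sn; move: (unres s); rewrite inE sn /= negbK => /eqP.
have xin : x \in [set a; b; c].
  apply/negPn/negP => xn; move: (dxy _ xn); rewrite gdist_id => /esym/eqP.
  by rewrite gdist_eq0 eq_sym (negbTE xy).
have yin : y \in [set a; b; c].
  apply/negPn/negP => yn; move: (dxy _ yn); rewrite gdist_id => /eqP.
  by rewrite gdist_eq0 (negbTE xy).
move: xin yin xy dxy; rewrite !inE.
move=> /orP[/orP[/eqP->|/eqP->]|/eqP->] /orP[/orP[/eqP->|/eqP->]|/eqP->]; rewrite ?eqxx // => _ h;
  first [ exact: Or31 h | exact: Or32 h | exact: Or33 h | exact: Or31 (unresolved_offC h)
        | exact: Or32 (unresolved_offC h) | exact: Or33 (unresolved_offC h) ].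
Qed.

Lemma triple_twins_off a b c : a != b -> b != c -> a != c ->
  [\/ twins_off e a b c, twins_off e a c b | twins_off e b c a].
Proof.
move=> ab bc ac; have [h|h|h] := triple_unresolved ab bc ac;
  [apply: Or31 | apply: Or32 | apply: Or33];
  move=> v v1 v2 v3; apply: (unresolved_off_adj h); rewrite !inE ?eqxx ?orbT //;
  by rewrite !negb_or v1 v2 v3 ?andbT.
Qed.

Lemma triple_dist_repeat a b c x : a != b -> b != c -> a != c -> x \notin [set a; b; c] ->
  [|| gdist e a x == gdist e b x, gdist e a x == gdist e c x | gdist e b x == gdist e c x].
Proof.
by move=> ab bc ac xn; have [h|h|h] := triple_unresolved ab bc ac; rewrite h ?eqxx ?orbT.
Qed.

Lemma diameter2 x y : x != y -> ~~ e x y -> exists z, e x z && e z y.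
Proof.
move=> xy nxy; case: (boolP [exists z, e x z && e z y]) => [/existsP//|/existsPn nocommon].
pose far v := [&& v != x, ~~ e v x & [forall z, ~~ (e v z && e z x)]].
have far_y : far y.
  rewrite /far eq_sym xy esy nxy /=; apply/forallP => z.
  by rewrite andbC (esy z x) (esy y z); apply: nocommon.
have [p pp ly] := connectP (econ x y).
have far_x : ~~ far x by rewrite /far eqxx.
have far_last : far (last x p) by rewrite -ly.
have [u [v [euv nfar_u /and3P[vx nevx /forallP nocommon_v]]]] := path_cross pp far_x far_last.
have ux : u != x by apply: contraNneq nevx => ux; rewrite -ux esy.
have neux : ~~ e u x by apply: contraNN (nocommon_v u) => eux; rewrite esy euv eux.
move: nfar_u; rewrite /far ux neux /= => /forallPn[z]; rewrite negbK => /andP[euz ezx].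
have zu : z != u by apply: contraTneq euz => ->; rewrite eirr.
have uv : u != v by apply: contraTneq euv => ->; rewrite eirr.
have zv : z != v by apply: contraTneq ezx => ->; rewrite (negbTE nevx).
have xn : x \notin [set z; u; v].
  rewrite !inE !negb_or (eq_sym x u) ux (eq_sym x v) vx !andbT.
  by apply: contraTneq ezx => <-; rewrite eirr.
have zx : z != x by apply: contraTneq ezx => ->; rewrite eirr.
have /eqP dz : gdist e z x == 1 by rewrite gdist_eq1.
have /eqP du : gdist e u x == 2.
  by rewrite gdist_eq2 ?(ltnW card_gt3) //; apply/existsP; exists z; rewrite euz.
have dv1 : 1 != gdist e v x by rewrite eq_sym gdist_eq1.
have dv2 : 2 != gdist e v x.
  by rewrite eq_sym gdist_eq2 ?(ltnW card_gt3) //; apply/existsPn.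
by have := triple_dist_repeat zu uv zv xn; rewrite dz du (negbTE dv1) (negbTE dv2).
Qed.

End MetricDimNMinus2.

Section Shapes.
Variables (T : finType) (e : rel T).

Definition cbip_on (A : {set T}) := forall u v, e u v = ((u \in A) != (v \in A)).

Definition csplit_on (A : {set T}) :=
  forall u v, e u v = (u != v) && ((u \in A) || (v \in A)).

(* The join [K_A + (K_B \cup K_1)] with [B = ~: A :\ c] and [c] the vertex of [K_1]. *)
Definition csplit1_on (A : {set T}) c :=
  forall u v, e u v = (u != v) && [|| u \in A, v \in A | (u != c) && (v != c)].

End Shapes.

Section Classification.
Variables (T : finType) (e : rel T).
Hypothesis esy : symmetric e.
Hypothesis eirr : irreflexive e.
Hypothesis noncomplete : exists x y, x != y /\ ~~ e x y.
Hypothesis triple_twins : forall a b c, a != b -> b != c -> a != c ->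
  [\/ twins_off e a b c, twins_off e a c b | twins_off e b c a].
Hypothesis diam2 : forall x y, x != y -> ~~ e x y -> exists z, e x z && e z y.

Lemma adj_neq x y : e x y -> x != y.
Proof. by apply: contraTneq => ->; rewrite eirr. Qed.

Ltac neq := first [ assumption | rewrite eq_sym; assumption |
  match goal with
  | H : is_true (e ?x ?y) |- is_true (?x != ?y) => exact: adj_neq H
  | H : is_true (e ?y ?x) |- is_true (?x != ?y) => rewrite eq_sym; exact: adj_neq H
  | H : e ?x ?y = true |- is_true (?x != ?y) => exact: adj_neq H
  | H : e ?y ?x = true |- is_true (?x != ?y) => rewrite eq_sym; exact: adj_neq H
  end ].

Ltac by_adj := repeat (match goal with
  | H : is_true (e ?a ?b) |- context [e ?a ?b] => rewrite H
  | H : is_true (e ?a ?b) |- context [e ?b ?a] => rewrite (esy b a) H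
  | H : e ?a ?b = true |- context [e ?a ?b] => rewrite H
  | H : e ?a ?b = true |- context [e ?b ?a] => rewrite (esy b a) H
  | H : e ?a ?b = false |- context [e ?a ?b] => rewrite H
  | H : e ?a ?b = false |- context [e ?b ?a] => rewrite (esy b a) H
  | H : is_true (~~ e ?a ?b) |- context [e ?a ?b] => rewrite (negbTE H)
  | H : is_true (~~ e ?a ?b) |- context [e ?b ?a] => rewrite (esy b a) (negbTE H)
  end); done.

Ltac twins_at h v := have := h v (ltac:(neq)) (ltac:(neq)) (ltac:(neq)); by_adj.

Section NoUniversalVertex.
Hypothesis no_universal : forall x, exists w, w != x /\ ~~ e x w.

Lemma no_private_neighbour_twins_off x y w : ~~ e x y -> ~~ e w y -> e x w -> x != y -> y != w ->
  ~~ twinsb e x w -> twins_off e x y w -> False.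
Proof.
move=> nxy nwy exw xy yw ntw tw_off.
have xw : x != w by neq.
case: (diam2 xy nxy) => m /andP[exm emy].
have mw : m != w by apply: contraTneq emy => ->; rewrite (negbTE nwy).
have mx : m != x by rewrite eq_sym; neq.
have my : m != y by neq.
case ewm : (e w m).
- have [h|h|h] := triple_twins xy (ltac:(neq) : y != m) (ltac:(neq) : x != m).
  + twins_at h w.
  + have [h'|h'|h'] :=
      triple_twins (ltac:(neq) : w != y) (ltac:(neq) : y != m) (ltac:(neq) : w != m).
    * twins_at h' x.
    * case/negP: ntw; apply/twinsP => v vx vw.
      case: (v =P y) => [->|/eqP vy]; first by by_adj.
      case: (v =P m) => [->|/eqP vm]; first by by_adj.
      by rewrite h // h'.
    * twins_at h' x.
  + twins_at h w.
- have wy : w != y by neq.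
  case: (diam2 wy nwy) => p /andP[ewp epy].
  have px : p != x by apply: contraTneq epy => ->; rewrite (negbTE nxy).
  have pm : p != m by apply: contraTneq ewp => ->; rewrite ewm.
  have pw : p != w by rewrite eq_sym; neq.
  have py : p != y by neq.
  have exp : e x p by rewrite tw_off // esy.
  have [h'|h'|h'] := triple_twins wy (ltac:(neq) : y != m) (ltac:(neq) : w != m).
  + twins_at h' x.
  + have emp : e m p by rewrite -h' // esy.
    have [h|h|h] := triple_twins pw wy py.
    * twins_at h m.
    * twins_at h x.
    * twins_at h x.
  + twins_at h' x.
Qed.

Lemma no_private_neighbour x y w : x != y -> ~~ e x y -> w != x -> w != y ->
  e x w -> ~~ e y w -> False.
Proof.
move=> xy nxy wx wy exw nyw.
case: (boolP (twinsb e x w)) => [/twinsP tw|ntw].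
- case: (diam2 xy nxy) => m /andP[exm emy].
  have mw : m != w by apply: contraTneq emy => ->; rewrite esy (negbTE nyw).
  have mx : m != x by rewrite eq_sym; neq.
  have my : m != y by neq.
  have ewm : e w m by rewrite -tw.
  have [h|h|h] := triple_twins xy (ltac:(neq) : y != m) (ltac:(neq) : x != m).
  + twins_at h w.
  + case: (no_universal m) => p [pm nmp].
    have py : p != y by apply: contraTneq nmp => ->; rewrite emy.
    have px : p != x by apply: contraTneq nmp => ->; rewrite esy exm.
    have pw : p != w by apply: contraTneq nmp => ->; rewrite esy ewm.
    have nxp : ~~ e x p by rewrite h.
    have [h'|h'|h'] := triple_twins xy (ltac:(neq) : y != p) (ltac:(neq) : x != p).
    * twins_at h' w.
    * twins_at h' m.
    * twins_at h' m.
  + twins_at h w.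
- have yw : y != w by neq.
  have xw : x != w by neq.
  have [h|h|h] := triple_twins xy yw xw.
  + by apply: (no_private_neighbour_twins_off nxy (_ : ~~ e w y) exw xy yw ntw h); rewrite esy.
  + case/negP: ntw; apply/twinsP => v vx vw.
    case: (v =P y) => [->|/eqP vy]; first by by_adj.
    by rewrite h.
  + have ntw' : ~~ twinsb e w x.
      by apply: contra ntw => /twinsP tw; apply/twinsP => v v1 v2; rewrite tw.
    have nwy : ~~ e w y by rewrite esy.
    have ewx : e w x by rewrite esy.
    apply: (no_private_neighbour_twins_off nwy nxy ewx _ _ ntw' (twins_offC h)); neq.
Qed.

Lemma nonadj_twins x y : x != y -> ~~ e x y -> twins e x y.
Proof.
move=> xy nxy; apply/twinsP; apply/negPn/negP => /forallPn[w].
rewrite !negb_imply => /and3P[wx wy dw].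
case exw : (e x w).
- by apply: (no_private_neighbour xy nxy wx wy exw); move: dw; rewrite exw; case: (e y w).
- have eyw : e y w by move: dw; rewrite exw; case: (e y w).
  have nyx : ~~ e y x by rewrite esy.
  by apply: (no_private_neighbour (ltac:(neq) : y != x) nyx wy wx eyw); rewrite exw.
Qed.

Lemma triangle_free x v v' : e x v -> e x v' -> e v v' -> False.
Proof.
move=> exv exv' evv'.
case: (no_universal x) => x' [x'x nxx'].
have tx := nonadj_twins (ltac:(neq) : x != x') nxx'.
have x'v : x' != v by apply: contraTneq nxx' => ->; rewrite exv.
have x'v' : x' != v' by apply: contraTneq nxx' => ->; rewrite exv'.
have ex'v : e x' v by rewrite -tx //; neq.
have ex'v' : e x' v' by rewrite -tx //; neq.
case: (no_universal v) => v'' [v''v nvv''].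
have v''x : v'' != x by apply: contraTneq nvv'' => ->; rewrite esy exv.
have v''v' : v'' != v' by apply: contraTneq nvv'' => ->; rewrite evv'.
have tv := nonadj_twins (ltac:(neq) : v != v'') nvv''.
have ev''v' : e v'' v' by rewrite -tv //; neq.
have [h|h|h] := triple_twins (ltac:(neq) : x != v) (ltac:(neq) : v != v') (ltac:(neq) : x != v').
- twins_at h x'.
- twins_at h x'.
- twins_at h v''.
Qed.

Lemma cbip_of_no_universal : exists A, [/\ cbip_on e A, 0 < #|A| & 0 < #|~: A|].
Proof.
case: noncomplete => x0 [y0 [xy nxy]].
exists [set v | ~~ e x0 v]; split.
- move=> u v; rewrite !inE.
  case: (u =P v) => [->|/eqP uv]; first by rewrite eirr ?eqxx.
  case: (u =P x0) => [->|/eqP ux]; first by rewrite eirr; case: (e x0 v).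
  case: (v =P x0) => [->|/eqP vx]; first by rewrite eirr esy; case: (e x0 u).
  case ex0u : (e x0 u); case ex0v : (e x0 v) => /=.
  + by have := triangle_free ex0u ex0v; case: (e u v) => // /(_ isT).
  + have tw := nonadj_twins (ltac:(neq) : x0 != v) (negbT ex0v).
    by rewrite esy -tw ?ex0u //; neq.
  + have tw := nonadj_twins (ltac:(neq) : x0 != u) (negbT ex0u).
    by rewrite -tw ?ex0v //; neq.
  + have tw := nonadj_twins (ltac:(neq) : x0 != u) (negbT ex0u).
    by rewrite -tw ?ex0v //; neq.
- by apply/card_gt0P; exists x0; rewrite inE eirr.
- case: (diam2 xy nxy) => z /andP[ez _].
  by apply/card_gt0P; exists z; rewrite !inE ez.
Qed.

End NoUniversalVertex.
Section UniversalVertex.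
Variable u0 : T.
Hypothesis u0_adj : forall v, v != u0 -> e u0 v.

Lemma nonuniversal_neq_u0 y : ~~ universal e y -> u0 != y.
Proof. by apply: contraNneq => <-; apply/universalP. Qed.

Lemma adj_nonuniversal_twins y z :
  ~~ universal e y -> ~~ universal e z -> e y z -> twins e y z.
Proof.
move=> nuy nuz eyz.
have uy := nonuniversal_neq_u0 nuy; have uz := nonuniversal_neq_u0 nuz.
have euy : e u0 y by apply: u0_adj; rewrite eq_sym.
have euz : e u0 z by apply: u0_adj; rewrite eq_sym.
have [h|h|h] := triple_twins uy (ltac:(neq) : y != z) uz.
- case/universalPn: nuy => w [wy nyw].
  have wz : w != z by apply: contraTneq eyz => <-; rewrite (negbTE nyw).
  have wu : w != u0 by apply: contraTneq nyw => ->; rewrite esy euy.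
  by have := h w wu wy wz; rewrite u0_adj // (negbTE nyw).
- case/universalPn: nuz => w [wz nzw].
  have wy : w != y by apply: contraTneq eyz => <-; rewrite esy (negbTE nzw).
  have wu : w != u0 by apply: contraTneq nzw => ->; rewrite esy euz.
  by have := h w wu wz wy; rewrite u0_adj // (negbTE nzw).
- move=> v vy vz; case: (v =P u0) => [->|/eqP vu]; last exact: h.
  by rewrite !(esy _ u0) euy euz.
Qed.

Lemma nonuniversal_edge_adj y z c : ~~ universal e y -> ~~ universal e z -> e y z ->
  c != y -> ~~ e y c -> forall w, w != y -> w != c -> e y w.
Proof.
move=> nuy nuz eyz cy nyc w; have tyz := adj_nonuniversal_twins nuy nuz eyz.
have cz : c != z by apply: contraTneq eyz => <-; rewrite (negbTE nyc).
have nzc : ~~ e z c by rewrite -tyz.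
have nuc : ~~ universal e c by apply: (nonadj_nonuniversal (y := y)); rewrite // esy.
have uy := nonuniversal_neq_u0 nuy.
have zu : z != u0 by rewrite eq_sym nonuniversal_neq_u0.
have [h|h|h] := triple_twins uy (ltac:(neq) : y != c) (nonuniversal_neq_u0 nuc).
- move=> wy wc; case: (w =P u0) => [->|/eqP wu]; last by rewrite -h // u0_adj.
  by rewrite esy u0_adj // eq_sym.
- by have := h z (ltac:(neq)) (ltac:(neq)) (ltac:(neq)); rewrite u0_adj // esy (negbTE nzc).
- by have := h z (ltac:(neq)) (ltac:(neq)) (ltac:(neq)); rewrite eyz esy (negbTE nzc).
Qed.

Lemma csplit1_of_universal y z : ~~ universal e y -> ~~ universal e z -> e y z ->
  exists c, [/\ c \notin [set x | universal e x], csplit1_on e [set x | universal e x] c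
              & 2 <= #|~: [set x | universal e x] :\ c|].
Proof.
move=> nuy nuz eyz; case/universalPn: (nuy) => c [cy nyc].
have cz : c != z by apply: contraTneq eyz => <-; rewrite (negbTE nyc).
have nuc : ~~ universal e c by apply: (nonadj_nonuniversal (y := y)); rewrite // esy.
have y_adj := nonuniversal_edge_adj nuy nuz eyz cy nyc.
have y_twins w : ~~ universal e w -> w != c -> w != y -> twins e y w.
  by move=> nuw wc wy; apply: adj_nonuniversal_twins => //; apply: y_adj.
have rest_adj w1 w2 : ~~ universal e w1 -> ~~ universal e w2 -> w1 != c -> w2 != c ->
    w1 != w2 -> e w1 w2.
  move=> nu1 nu2 c1 c2 w12.
  case: (w1 =P y) => [E|/eqP w1y]; first by subst w1; apply: y_adj; rewrite // eq_sym.
  case: (w2 =P y) => [E|/eqP w2y]; first by subst w2; rewrite esy; apply: y_adj.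
  by rewrite -(y_twins w1) //; [apply: y_adj | rewrite eq_sym].
have rest_nadj_c w : ~~ universal e w -> w != c -> ~~ e w c.
  move=> nuw wc; case: (w =P y) => [->|/eqP wy] //.
  by rewrite -(y_twins w) // eq_sym.
exists c; split; first by rewrite inE.
- move=> a b; rewrite !inE; case: (a =P b) => [<-|/eqP ab]; first by rewrite eirr.
  case ua : (universal e a); first by move/universalP: ua; apply; rewrite eq_sym.
  case ub : (universal e b); first by rewrite esy; move/universalP: ub; apply.
  case: (a =P c) => [E|/eqP ac] /=.
    by subst a; rewrite esy; apply/negbTE; apply: rest_nadj_c; rewrite ?ub // eq_sym.
  case: (b =P c) => [E|/eqP bc] /=.
    by subst b; apply/negbTE; apply: rest_nadj_c; rewrite ?ua.
  by apply: rest_adj; rewrite ?ua ?ub.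
- have : [set y; z] \subset ~: [set x | universal e x] :\ c.
    apply/subsetP => w; rewrite in_setCD1 in_set2 inE.
    by case/orP => /eqP->; rewrite ?nuy ?nuz eq_sym.
  by move/subset_leq_card; rewrite cards2 (ltac:(neq) : y != z).
Qed.

End UniversalVertex.

Lemma csplit_of_indep_nonuniversal :
  (forall y z, ~~ universal e y -> ~~ universal e z -> ~~ e y z) ->
  csplit_on e [set x | universal e x] /\ 2 <= #|~: [set x | universal e x]|.
Proof.
move=> indep; split.
- move=> a b; rewrite !inE; case: (a =P b) => [<-|/eqP ab]; first by rewrite eirr.
  case ua : (universal e a); first by move/universalP: ua; apply; rewrite eq_sym.
  case ub : (universal e b); first by rewrite esy; move/universalP: ub; apply.
  by apply/negbTE/indep; rewrite ?ua ?ub.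
- case: noncomplete => x [y [xy nxy]].
  have : [set x; y] \subset ~: [set x | universal e x].
    apply/subsetP => w; rewrite in_set2 !inE => /orP[]/eqP->.
      exact: nonadj_nonuniversal nxy.
    by apply: (nonadj_nonuniversal (y := x)); rewrite 1?eq_sym // esy.
  by move/subset_leq_card; rewrite cards2 xy.
Qed.

Lemma graph_shapes :
  [\/ exists A, [/\ cbip_on e A, 0 < #|A| & 0 < #|~: A|],
      exists A, csplit_on e A /\ 2 <= #|~: A|
    | exists (A : {set T}) c, [/\ c \notin A, csplit1_on e A c & 2 <= #|~: A :\ c|]].
Proof.
case: (boolP [exists u, universal e u]) => [/existsP[u /universalP u_adj]|nouniv].
- case: (boolP [exists y, exists z, [&& ~~ universal e y, ~~ universal e z & e y z]]).
  + case/existsP => y /existsP[z /and3P[nuy nuz eyz]].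
    by apply: Or33; exists [set x | universal e x]; exact: (csplit1_of_universal u_adj nuy nuz eyz).
  + move/existsPn => indep; apply: Or32; exists [set x | universal e x].
    apply: csplit_of_indep_nonuniversal => y z nuy nuz.
    by move/existsPn/(_ z): (indep y); rewrite nuy nuz.
- apply: Or31; apply: cbip_of_no_universal => x.
  by apply/universalPn; move/existsPn: nouniv; apply.
Qed.

End Classification.

Section Distinguishing.
Variables (T : finType) (e : rel T).
Hypothesis esy : symmetric e.
Hypothesis eirr : irreflexive e.

Definition distinguishable k := [exists c : {ffun T -> 'I_k}, distinguishing e c].

Lemma dist_numberE k : distinguishable k -> (forall j, j < k -> ~~ distinguishable j) ->
  k <= #|T| -> dist_number e = k.
Proof. by move=> Dk min kT; apply: find_iotaE. Qed.

Lemma is_autP (p : {perm T}) : is_aut e p -> forall x y, e (p x) (p y) = e x y.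
Proof. by move=> /forallP ap x y; move/forallP/(_ y)/eqP: (ap x). Qed.

Lemma twins_tperm_aut x y : twins e x y -> is_aut e (tperm x y).
Proof.
move=> tw; apply/forallP => u; apply/forallP => v; apply/eqP.
have tw' w : w != x -> w != y -> e y w = e x w by move=> wx wy; rewrite tw.
case: (x =P y) => [->|/eqP xy]; first by rewrite tperm1 !perm1.
case: tpermP => [->|->|/eqP ux /eqP uy]; case: tpermP => [->|->|/eqP vx /eqP vy] //;
  rewrite ?eirr ?(esy y x) //.
- by rewrite tw'.
- by rewrite tw.
- by rewrite (esy u y) (esy u x) tw'.
- by rewrite (esy u y) (esy u x) tw.
Qed.

Lemma distinguishing_twins_inj k (c : {ffun T -> 'I_k}) x y :
  distinguishing e c -> twins e x y -> c x = c y -> x = y.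
Proof.
move=> /forallP/(_ (tperm x y)) D tw cxy; apply/eqP/negPn/negP => xy.
have : tperm x y == 1%g.
  apply: (implyP D); rewrite twins_tperm_aut //=; apply/forallP => v.
  by case: tpermP => [->|->|] //; rewrite cxy.
by move/eqP/permP/(_ x); rewrite tpermL perm1 => E; rewrite E eqxx in xy.
Qed.

Lemma twins_set_ndistinguishable (X : {set T}) k :
  {in X &, forall x y, twins e x y} -> k < #|X| -> ~~ distinguishable k.
Proof.
move=> tw kX; apply/existsP => -[c D].
have c_inj : {in X &, injective c}.
  by move=> x y xX yX; apply: distinguishing_twins_inj D (tw _ _ xX yX).
by move: (max_card (c @: X)); rewrite card_ord card_in_imset // leqNgt kX.
Qed.

Lemma distinguishable_by (R : eqType) k (f : T -> nat) (cl : T -> R) :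
  (forall v, f v < k) ->
  (forall p : {perm T}, is_aut e p -> (forall x, f (p x) = f x) -> forall x, cl (p x) = cl x) ->
  (forall u v, cl u = cl v -> f u = f v -> u = v) -> distinguishable k.
Proof.
move=> fk cl_aut fcl_inj; apply/existsP; exists [ffun v => Ordinal (fk v)].
apply/forallP => p; apply/implyP => /andP[ap /forallP pf].
have fp x : f (p x) = f x by move/eqP: (pf x); rewrite !ffunE => -[].
by apply/eqP/permP => x; rewrite perm1; apply: fcl_inj; [exact: cl_aut | exact: fp].
Qed.

Lemma universal_aut (p : {perm T}) x : is_aut e p -> universal e (p x) = universal e x.
Proof.
move=> /is_autP ap; apply/universalP/universalP => ux v vx.
  by rewrite -ap ux // (inj_eq (@perm_inj _ p)).
by rewrite -[v](permKV p) ap ux // -(inj_eq (@perm_inj _ p)) permKV.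
Qed.

Lemma card_nbs_aut (p : {perm T}) x :
  is_aut e p -> #|[set y | e (p x) y]| = #|[set y | e x y]|.
Proof.
move=> ap; rewrite -[LHS](card_preimset _ (@perm_inj _ p)).
by apply: eq_card => y; rewrite !inE (is_autP ap).
Qed.

Lemma dist_number_twin_classes (R : eqType) (cl : T -> R) k :
  (forall p, is_aut e p -> forall x, cl (p x) = cl x) ->
  (forall x y, cl x = cl y -> twins e x y) ->
  (forall x, #|[set y | cl y == cl x]| <= k) ->
  (exists x, k <= #|[set y | cl y == cl x]|) -> dist_number e = k.
Proof.
move=> cl_aut cl_twins small [x0 big].
have in_class v : v \in [set y | cl y == cl v] by rewrite inE.
apply: dist_numberE.
- apply: (@distinguishable_by _ _ (fun v => index_in [set y | cl y == cl v] v) cl).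
  + by move=> v; apply: leq_trans (index_in_lt (in_class v)) (small v).
  + by move=> p ap _; apply: cl_aut.
  + move=> u v cluv; rewrite cluv; apply: index_in_inj => //.
    by rewrite inE cluv.
- move=> j jk; apply: twins_set_ndistinguishable (leq_trans jk big).
  by move=> x y; rewrite !inE => /eqP clx /eqP cly; apply: cl_twins; rewrite clx cly.
- exact: leq_trans big (max_card _).
Qed.

Lemma card_side (A : {set T}) x :
  #|[set y | (y \in A) == (x \in A)]| = if x \in A then #|A| else #|~: A|.
Proof. by case: ifP => xA; apply: eq_card => y; rewrite !inE ?xA; case: (y \in A). Qed.

Lemma dist_number_two_parts (A : {set T}) : 0 < #|T| ->
  (forall p, is_aut e p -> forall x, (p x \in A) = (x \in A)) ->
  (forall x y, (x \in A) = (y \in A) -> twins e x y) ->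
  dist_number e = maxn #|A| #|~: A|.
Proof.
move=> T0 A_aut A_twins.
apply: (@dist_number_twin_classes _ (fun x => x \in A)) A_aut A_twins _ _ => [x|].
  by rewrite card_side; case: ifP => _; rewrite ?leq_maxl ?leq_maxr.
have cardT := cardsC A.
case: (leqP #|~: A| #|A|) => AC.
- have /card_gt0P[x xA] : 0 < #|A| by lia.
  by exists x; rewrite card_side xA.
- have /card_gt0P[x xCA] : 0 < #|~: A| by lia.
  by move: xCA; rewrite inE => /negbTE xA; exists x; rewrite card_side xA.
Qed.

End Distinguishing.

Section DistNumberShapes.
Variables (T : finType) (e : rel T).
Hypothesis esy : symmetric e.
Hypothesis eirr : irreflexive e.

Section CompleteSplit.
Variable A : {set T}.
Hypothesis eA : csplit_on e A.
Hypothesis CA2 : 1 < #|~: A|.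

Lemma universal_csplit x : universal e x = (x \in A).
Proof.
case xA : (x \in A); first by apply/universalP => v vx; rewrite eA xA eq_sym vx.
apply/negbTE/universalPn; have [y] := card_gt1_other x CA2; rewrite inE => yA yx.
by exists y; rewrite yx eA xA (negbTE yA) andbF.
Qed.

Lemma dist_number_csplit : dist_number e = maxn #|A| #|~: A|.
Proof.
apply: (dist_number_two_parts esy eirr) => [||x y xy v vx vy].
- exact: leq_trans (ltnW CA2) (max_card _).
- by move=> p ap x; rewrite -!universal_csplit universal_aut.
- by rewrite !eA xy (eq_sym x) vx (eq_sym y) vy.
Qed.

End CompleteSplit.

Section CompleteSplit1.
Variables (A : {set T}) (c : T).
Hypothesis cA : c \notin A.
Hypothesis eA : csplit1_on e A c.
Hypothesis B2 : 1 < #|~: A :\ c|.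

Lemma universal_csplit1 x : universal e x = (x \in A).
Proof.
case xA : (x \in A); first by apply/universalP => v vx; rewrite eA xA eq_sym vx.
apply/negbTE/universalPn; case: (x =P c) => [->|/eqP xc].
  have [y] := card_gt1_other c B2; rewrite in_setCD1 => /andP[yA yc] _.
  by exists y; rewrite yc eA (negbTE cA) (negbTE yA) eqxx /= andbF.
by exists c; rewrite eq_sym xc eA xA (negbTE cA) eqxx xc andbF.
Qed.

Lemma csplit1_aut_c (p : {perm T}) : is_aut e p -> p c = c.
Proof.
move=> ap; have pA x : (p x \in A) = (x \in A) by rewrite -!universal_csplit1 universal_aut.
apply/eqP/negPn/negP => pcc.
have [w] := card_gt1_other (p c) B2; rewrite in_setCD1 => /andP[wA wc] wpc.
have : e (p c) w by rewrite eA eq_sym wpc pA (negbTE cA) (negbTE wA) wc pcc.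
rewrite -[w](permKV p) (is_autP ap) eA (negbTE cA) eqxx /= orbF => /andP[_].
by rewrite -pA permKV (negbTE wA).
Qed.

Lemma dist_number_csplit1 : dist_number e = maxn #|A| #|~: A :\ c|.
Proof.
pose cl x := if x == c then None else Some (x \in A).
have card_class x : #|[set y | cl y == cl x]| =
    if x == c then 1 else if x \in A then #|A| else #|~: A :\ c|.
  rewrite /cl; have [xc|xc] := eqVneq x c.
    by subst x; rewrite -(cards1 c); apply: eq_card => y; rewrite !inE; case: (y == c).
  case: ifP => xA; apply: eq_card => y; rewrite !inE.
    by case: (y =P c) => [->|_] /=; rewrite ?(negbTE cA) //; case: (y \in A).
  by case: (y =P c) => [->|_]; rewrite ?eqxx //=; case: (y \in A).
apply: (@dist_number_twin_classes _ _ esy eirr _ cl) => [p ap x|x y|x|].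
- rewrite /cl -{1}(csplit1_aut_c ap) (inj_eq (@perm_inj _ p)).
  by rewrite -!universal_csplit1 universal_aut.
- rewrite /cl; have [->|xc] := eqVneq x c; have [->|yc] := eqVneq y c => //= [[xy]].
  by move=> v vx vy; rewrite !eA xy xc yc (eq_sym x) vx (eq_sym y) vy.
- rewrite card_class; case: ifP => _; first exact: leq_trans (ltnW B2) (leq_maxr _ _).
  by case: ifP => _; rewrite ?leq_maxl ?leq_maxr.
- case: (leqP #|~: A :\ c| #|A|) => AB.
  + have /card_gt0P[x xA] : 0 < #|A| by apply: leq_trans AB; apply: ltnW.
    have xc : x != c by apply: contraNneq cA => <-.
    by exists x; rewrite card_class (negbTE xc) xA.
  + have /card_gt0P[x] : 0 < #|~: A :\ c| by apply: leq_trans (ltnW B2).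
    rewrite in_setCD1 => /andP[/negbTE xA /negbTE xc].
    by exists x; rewrite card_class xc xA.
Qed.

End CompleteSplit1.

Lemma cbip_onC A : cbip_on e A -> cbip_on e (~: A).
Proof. by move=> eA u v; rewrite eA !inE; case: (u \in A); case: (v \in A). Qed.

Section CompleteBipartite.
Variable A : {set T}.
Hypothesis eA : cbip_on e A.
Hypothesis A0 : 0 < #|A|.

Lemma cbip_twins x y : (x \in A) = (y \in A) -> twins e x y.
Proof. by move=> xy v _ _; rewrite !eA xy. Qed.

Lemma cbip_nbs x : [set y | e x y] = if x \in A then ~: A else A.
Proof. by apply/setP => y; case: ifP => xA; rewrite !inE eA xA // negbK. Qed.

Lemma cbip_aut_stable (p : {perm T}) : #|A| != #|~: A| -> is_aut e p ->
  forall x, (p x \in A) = (x \in A).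
Proof.
move=> AC ap x; have := card_nbs_aut x ap; rewrite !cbip_nbs.
by case: (p x \in A); case: (x \in A) => // cardE; move: AC; rewrite cardE eqxx.
Qed.

Lemma cbip_aut_fix (p : {perm T}) y : is_aut e p -> p y = y ->
  forall x, (p x \in A) = (x \in A).
Proof.
move=> ap py x; have := is_autP ap y x; rewrite py !eA.
by case: (y \in A); case: (p x \in A); case: (x \in A).
Qed.

Lemma dist_number_cbip_neq : #|A| != #|~: A| -> dist_number e = maxn #|A| #|~: A|.
Proof.
move=> AC; apply: dist_number_two_parts => //; first exact: leq_trans A0 (max_card _).
  by move=> p; apply: cbip_aut_stable.
exact: cbip_twins.
Qed.

Lemma cbip_balanced_ndistinguishable : #|A| = #|~: A| -> ~~ distinguishable e #|A|.
Proof.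
move=> AC; apply/existsP => -[c D].
have c_inj (X : {set T}) :
    (forall x y, x \in X -> y \in X -> (x \in A) = (y \in A)) -> {in X &, injective c}.
  move=> XA x y xX yX; apply: (distinguishing_twins_inj esy eirr D).
  exact/cbip_twins/XA.
have injA : {in A &, injective c} by apply: c_inj => x y ->.
have injC : {in ~: A &, injective c}.
  by apply: c_inj => x y; rewrite !inE => /negbTE-> /negbTE->.
pose g v := odflt v [pick w | ((w \in A) != (v \in A)) && (c w == c v)].
have gP v : ((g v \in A) != (v \in A)) && (c (g v) == c v).
  rewrite /g; case: pickP => [w -> //|none].
  case vA : (v \in A).
  - have [w] := onto_of_card_in_inj (esym AC) injC (c v); rewrite inE => wA cw.
    by have := none w; rewrite (negbTE wA) vA cw eqxx.
  - have [w wA cw] := onto_of_card_in_inj erefl injA (c v).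
    by have := none w; rewrite wA vA cw eqxx.
have gA v : (g v \in A) = (v \notin A).
  by case/andP: (gP v); case: (g v \in A); case: (v \in A).
have gc v : c (g v) = c v by case/andP: (gP v) => _ /eqP.
have gK : cancel g g.
  move=> v; case vA : (v \in A).
  - by apply: injA; rewrite ?gA ?vA ?negbK // !gc.
  - by apply: injC; rewrite ?inE ?gA ?vA ?negbK // !gc.
pose s := perm (can_inj gK).
have s_aut : is_aut e s.
  apply/forallP => x; apply/forallP => y.
  by rewrite !permE !eA !gA; case: (x \in A); case: (y \in A).
have /eqP/permP s1 : s == 1%g.
  move/forallP/(_ s)/implyP: D; apply; rewrite s_aut.
  by apply/forallP => x; rewrite permE gc.
case/card_gt0P: A0 => x xA; move: (s1 x); rewrite permE perm1 => gx.
by have := gA x; rewrite gx xA.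
Qed.

Lemma dist_number_cbip_balanced : #|A| = #|~: A| -> dist_number e = #|A|.+1.
Proof.
move=> AC; case/card_gt0P: (A0) => x0 _.
apply: dist_numberE.
- pose f v := if v \in A then index_in A v else (index_in (~: A) v).+1.
  apply: (distinguishable_by (f := f) (cl := fun v => v \in A)).
  + move=> v; rewrite /f; case: ifP => vA; first exact: leq_trans (index_in_lt vA) _.
    by rewrite ltnS AC; apply: index_in_lt; rewrite inE vA.
  + move=> p ap fp.
    (* the vertex coloured [0] is unique, hence fixed *)
    pose y := nth x0 (enum A) 0.
    have yA : y \in A by apply: nth_enum_in.
    have fy : f y = 0 by rewrite /f yA index_in_nth.
    have py : p y = y.
      have := fp y; rewrite fy /f; case: ifP => pyA // E.
      by apply: (index_in_inj pyA yA); rewrite E -fy /f yA.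
    by move=> x; rewrite (cbip_aut_fix ap py).
  + move=> u v uv; rewrite /f uv; case vA : (v \in A) => E.
      by apply: (index_in_inj _ vA E); rewrite uv.
    by case: E => E; apply: (index_in_inj _ _ E); rewrite inE ?uv vA.
- move=> j; rewrite ltnS leq_eqVlt => /orP[/eqP->|jA].
    exact: cbip_balanced_ndistinguishable.
  apply: (twins_set_ndistinguishable esy eirr _ jA) => x y xA yA.
  by apply: cbip_twins; rewrite xA yA.
- by rewrite -(cardsC A) -AC; move: A0; clear; lia.
Qed.

End CompleteBipartite.

Lemma dist_number_cbip A : cbip_on e A -> 0 < #|A| -> 0 < #|~: A| ->
  dist_number e = if #|A| == #|~: A| then #|A|.+1 else maxn #|A| #|~: A|.
Proof.
move=> eA A0 CA0; case: ifP => [/eqP|/negbT]; first exact: dist_number_cbip_balanced.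
exact: dist_number_cbip_neq.
Qed.
End DistNumberShapes.

Section Isomorphisms.
Variables (T : finType) (e : rel T).

Lemma isomorphic_of_inj (G : Defs.fgraph) (g : vert G -> T) : injective g -> #|vert G| = #|T| ->
  (forall u v, e (g u) (g v) = adj u v) -> isomorphic e G.
Proof.
move=> g_inj cardG ge.
have [f gK fK] : bijective g by apply: inj_card_bij; rewrite // cardG.
by exists f; split; [exists g | move=> x y; rewrite -ge !fK].
Qed.

Lemma isomorphic_card (G : Defs.fgraph) : isomorphic e G -> #|T| = #|vert G|.
Proof. by case=> f [f_bij _]; exact: bij_eq_card f_bij. Qed.

Definition parts_enum (A : {set T}) (u : 'I_#|A| + 'I_#|~: A|) : T :=
  match u with inl i => enum_val i | inr j => enum_val j end.
Arguments parts_enum : clear implicits.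

Lemma parts_enum_in A u : (parts_enum A u \in A) = is_inl u.
Proof.
case: u => [i|j] /=; first exact: enum_valP.
by apply/negbTE; rewrite -in_setC; apply: enum_valP.
Qed.

Lemma parts_enum_inj A : injective (parts_enum A).
Proof.
move=> u v E; have := parts_enum_in u; rewrite E parts_enum_in.
by case: u v E => [i|j] [i'|j'] //= /enum_val_inj ->.
Qed.

Lemma card_parts (A : {set T}) : #|{: 'I_#|A| + 'I_#|~: A|}| = #|T|.
Proof. by rewrite card_sum !card_ord cardsC. Qed.

Lemma cbip_on_isomorphic A s t : cbip_on e A -> #|A| = s -> #|~: A| = t ->
  isomorphic e (Kbip s t).
Proof.
move=> eA <- <-.
apply: (@isomorphic_of_inj (Kbip _ _) (parts_enum A) (@parts_enum_inj A)).
  exact: card_parts.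
by move=> u v; rewrite eA !parts_enum_in; case: u; case: v.
Qed.

Lemma csplit_on_isomorphic A s t : csplit_on e A -> #|A| = s -> #|~: A| = t ->
  isomorphic e (gjoin (Kn s) (Kbar t)).
Proof.
move=> eA <- <-.
apply: (@isomorphic_of_inj (gjoin (Kn _) (Kbar _)) (parts_enum A) (@parts_enum_inj A)).
  exact: card_parts.
move=> u v; rewrite eA (inj_eq (@parts_enum_inj A)) !parts_enum_in.
by case: u => [i|j]; case: v => [i'|j'] //=; rewrite ?andbT ?andbF.
Qed.

Lemma csplit1_on_isomorphic (A : {set T}) c s t : c \notin A -> csplit1_on e A c ->
  #|A| = s -> #|~: A :\ c| = t -> isomorphic e (gjoin (Kn s) (gunion (Kn t) (Kn 1))).
Proof.
move=> cA eA <- <-.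
pose g (u : 'I_#|A| + ('I_#|~: A :\ c| + 'I_1)) : T :=
  match u with inl i => enum_val i | inr (inl j) => enum_val j | inr (inr _) => c end.
have gA u : (g u \in A) = is_inl u.
  case: u => [i|[j|k]] /=; [exact: enum_valP | | exact/negbTE].
  by have := enum_valP j; rewrite in_setCD1 => /andP[/negbTE].
have gc u : (g u == c) = (if u is inr (inr _) then true else false).
  case: u => [i|[j|k]] /=; rewrite ?eqxx //.
    by apply/negbTE; apply: contraNneq cA => <-; apply: enum_valP.
  by have := enum_valP j; rewrite in_setCD1 => /andP[_ /negbTE].
have g_inj : injective g.
  move=> u v E; have := gA u; have := gc u; rewrite E gA gc.
  case: u v E => [i|[j|k]] [i'|[j'|k']] //= E _ _; try by rewrite (enum_val_inj E).
  by rewrite (ord1 k) (ord1 k').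
apply: (@isomorphic_of_inj (gjoin (Kn _) (gunion (Kn _) (Kn 1))) g g_inj).
  by rewrite !card_sum !card_ord -(cardsC A) -(card_setCD1 cA) addn1.
move=> u v; rewrite eA (inj_eq g_inj) !gA !gc.
case: u => [i|[j|k]]; case: v => [i'|[j'|k']] //=; rewrite ?andbT ?andbF ?orbT ?orbF //.
by rewrite (ord1 k) (ord1 k') eqxx.
Qed.

End Isomorphisms.

Section IsomorphicShapes.
Variables (T : finType) (e : rel T).

Lemma card_preimset_bij (T' : finType) (f : T -> T') (X : {set T'}) :
  bijective f -> #|f @^-1: X| = #|X|.
Proof. by move=> f_bij; apply: on_card_preimset; apply: onW_bij. Qed.

Lemma cbip_on_of_iso s t : isomorphic e (Kbip s t) ->
  exists A, [/\ cbip_on e A, #|A| = s & #|~: A| = t].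
Proof.
case=> f [f_bij fE]; exists (f @^-1: inl_set 'I_s 'I_t).
rewrite -preimsetC !card_preimset_bij // card_inl_set card_inl_setC !card_ord.
by split => // x y; rewrite -fE !inE; case: (f x); case: (f y).
Qed.

Lemma csplit_on_of_iso s t : isomorphic e (gjoin (Kn s) (Kbar t)) ->
  exists A, [/\ csplit_on e A, #|A| = s & #|~: A| = t].
Proof.
case=> f [f_bij fE]; exists (f @^-1: inl_set 'I_s 'I_t).
rewrite -preimsetC !card_preimset_bij // card_inl_set card_inl_setC !card_ord.
split => // x y; rewrite -fE !inE -(inj_eq (bij_inj f_bij)).
by case: (f x) => [i|j]; case: (f y) => [i'|j'] //=; rewrite ?andbT ?andbF.
Qed.

Lemma csplit1_on_of_iso s t : isomorphic e (gjoin (Kn s) (gunion (Kn t) (Kn 1))) ->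
  exists (A : {set T}) c, [/\ c \notin A, csplit1_on e A c, #|A| = s & #|~: A :\ c| = t].
Proof.
case=> f [f_bij fE]; have [g fK gK] := f_bij.
pose c' : 'I_s + ('I_t + 'I_1) := inr (inr ord0).
have fc x : (x == g c') = (f x == c') by apply/eqP/eqP => [->|<-]; rewrite ?gK ?fK.
pose A := f @^-1: inl_set 'I_s ('I_t + 'I_1)%type.
have cA : g c' \notin A by rewrite !inE gK.
exists A, (g c'); split => //.
- move=> x y; rewrite -fE !inE !fc -(inj_eq (bij_inj f_bij)).
  case: (f x) => [i|[j|k]]; case: (f y) => [i'|[j'|k']] //=; rewrite ?andbT ?andbF //=;
    by rewrite /c' ?(ord1 k) ?(ord1 k') eqxx.
- by rewrite card_preimset_bij // card_inl_set card_ord.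
- apply/eqP; rewrite -eqSS card_setCD1 // -preimsetC card_preimset_bij //.
  by rewrite card_inl_setC card_sum !card_ord addn1.
Qed.

End IsomorphicShapes.

Definition listed_graph (T : finType) (e : rel T) (l : nat) : Prop :=
     (isomorphic e (Kbip l.+1 l.+1)) \/
     (exists t, l.+1 <= t /\ isomorphic e (Kbip t l)) \/
     (exists t, l <= t /\ isomorphic e (gjoin (Kn l) (Kbar t))) \/
     (exists t, l <= t /\ 2 <= l /\ isomorphic e (gjoin (Kn t) (Kbar l))) \/
     (exists t, maxn 2 l.-1 <= t /\
        isomorphic e (gjoin (Kn l.-1) (gunion (Kn t) (Kn 1)))) \/
     (exists t, maxn 2 l.-1 <= t /\
        isomorphic e (gjoin (Kn t) (gunion (Kn l.-1) (Kn 1)))).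

Section Listed.
Variables (T : finType) (e : rel T).
Hypothesis esy : symmetric e.
Hypothesis eirr : irreflexive e.
Variable l : nat.

Lemma cbip_listed A : cbip_on e A -> 0 < #|A| -> 0 < #|~: A| ->
  dist_number e = #|T| - l -> listed_graph e l.
Proof.
move=> eA A0 CA0; have cardT := cardsC A.
rewrite (dist_number_cbip esy eirr eA A0 CA0); case: ltngtP => AC D.
- right; left; exists #|~: A|; split; first by lia.
  by apply: (cbip_on_isomorphic (cbip_onC eA)); rewrite ?setCK; lia.
- right; left; exists #|A|; split; first by lia.
  by apply: (cbip_on_isomorphic eA); lia.
- by left; apply: (cbip_on_isomorphic eA); lia.
Qed.

Lemma csplit_listed A : csplit_on e A -> 1 < #|~: A| ->
  dist_number e = #|T| - l -> listed_graph e l.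
Proof.
move=> eA CA2; have cardT := cardsC A.
rewrite (dist_number_csplit esy eirr eA CA2); case: (leqP #|A| #|~: A|) => AC D.
- do 2 right; left; exists #|~: A|; split; first by lia.
  by apply: (csplit_on_isomorphic eA); lia.
- do 3 right; left; exists #|A|; do 2 (split; first by lia).
  by apply: (csplit_on_isomorphic eA); lia.
Qed.

Lemma csplit1_listed (A : {set T}) c : c \notin A -> csplit1_on e A c -> 1 < #|~: A :\ c| ->
  dist_number e = #|T| - l -> listed_graph e l.
Proof.
move=> cA eA B2; have cardT := cardsC A; have cardB := card_setCD1 cA.
rewrite (dist_number_csplit1 esy eirr cA eA B2); case: (leqP #|A| #|~: A :\ c|) => AB D.
- do 4 right; left; exists #|~: A :\ c|; split; first by lia.
  by apply: (csplit1_on_isomorphic cA eA); lia.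
- do 5 right; exists #|A|; split; first by lia.
  by apply: (csplit1_on_isomorphic cA eA); lia.
Qed.

End Listed.

Section ListedDistNumber.
Variables (T : finType) (e : rel T).
Hypothesis esy : symmetric e.
Hypothesis eirr : irreflexive e.

Lemma csplit_of_csplit1 (A : {set T}) c : csplit1_on e A c -> #|~: A :\ c| <= 1 ->
  csplit_on e A.
Proof.
move=> eA B1 u v; rewrite eA; case: (boolP (u == v)) => //= uv.
case uA : (u \in A); case vA : (v \in A) => //=; apply/negbTE/negP => /andP[uc vc].
have : [set u; v] \subset ~: A :\ c.
  by apply/subsetP => w; rewrite in_setCD1 in_set2 => /orP[]/eqP->; rewrite ?uA ?vA ?uc ?vc.
by move/subset_leq_card; rewrite cards2 uv => /leq_trans/(_ B1).
Qed.

Lemma dist_number_Kbip s t : isomorphic e (Kbip s t) -> 0 < s -> 0 < t ->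
  dist_number e = if s == t then s.+1 else maxn s t.
Proof. by case/cbip_on_of_iso => A [eA <- <-]; apply: dist_number_cbip. Qed.

Lemma dist_number_Kn_join_Kbar s t : isomorphic e (gjoin (Kn s) (Kbar t)) -> 1 < t ->
  dist_number e = maxn s t.
Proof. by case/csplit_on_of_iso => A [eA <- <-]; apply: dist_number_csplit. Qed.

Lemma dist_number_Kn_join_Kn_K1 s t : isomorphic e (gjoin (Kn s) (gunion (Kn t) (Kn 1))) ->
  0 < t -> 1 < maxn s t -> dist_number e = maxn s t.
Proof.
case/csplit1_on_of_iso => A [c [cA eA <- <-]] B0.
case: (ltnP 1 #|~: A :\ c|) => B2 AB; first exact: dist_number_csplit1.
have CA2 : #|~: A| = 2 by rewrite -(card_setCD1 cA); lia.
by rewrite (dist_number_csplit esy eirr (csplit_of_csplit1 eA B2)) CA2; lia.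
Qed.

Lemma Kn_join_K1_complete s : isomorphic e (gjoin (Kn s) (gunion (Kn 0) (Kn 1))) ->
  forall x y, x != y -> e x y.
Proof.
case=> f [f_bij fE] x y xy; rewrite -fE.
have : f x != f y by rewrite (inj_eq (bij_inj f_bij)).
by case: (f x) => [i|[[] //|k]]; case: (f y) => [i'|[[] //|k']] //=;
  rewrite (ord1 k) (ord1 k') eqxx.
Qed.

Lemma listed_dist_number l : 0 < l -> 3 < #|T| -> (exists x y, x != y /\ ~~ e x y) ->
  listed_graph e l -> dist_number e = #|T| - l.
Proof.
move=> l_gt0 nT [x [y [xy nxy]]].
case=> [G|[[t [lt G]]|[[t [lt G]]|[[t [lt [l2 G]]]|[[t [lt G]]|[t [lt G]]]]]]];
  have := isomorphic_card G; rewrite !card_sum !card_ord => cardT.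
- by rewrite (dist_number_Kbip G) // eqxx; lia.
- by rewrite (dist_number_Kbip G) ?ifN; try lia; apply/eqP; lia.
- by rewrite (dist_number_Kn_join_Kbar G); lia.
- by rewrite (dist_number_Kn_join_Kbar G); lia.
- by rewrite (dist_number_Kn_join_Kn_K1 G); lia.
- case: (posnP l.-1) => l1; last by rewrite (dist_number_Kn_join_Kn_K1 G); lia.
  by move: G; rewrite l1 => /Kn_join_K1_complete/(_ x y xy); rewrite (negbTE nxy).
Qed.

End ListedDistNumber.

Theorem proposition2p4 (T : finType) (e : rel T) (l : nat) :
  symmetric e -> irreflexive e -> connected_graph e ->
  metric_dim e = #|T| - 2 -> 2 <= metric_dim e -> 1 <= l ->
  (dist_number e = #|T| - l <->
     (isomorphic e (Kbip l.+1 l.+1)) \/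
     (exists t, l.+1 <= t /\ isomorphic e (Kbip t l)) \/
     (exists t, l <= t /\ isomorphic e (gjoin (Kn l) (Kbar t))) \/
     (exists t, l <= t /\ 2 <= l /\ isomorphic e (gjoin (Kn t) (Kbar l))) \/
     (exists t, maxn 2 l.-1 <= t /\
        isomorphic e (gjoin (Kn l.-1) (gunion (Kn t) (Kn 1)))) \/
     (exists t, maxn 2 l.-1 <= t /\
        isomorphic e (gjoin (Kn t) (gunion (Kn l.-1) (Kn 1))))).
Proof.
move=> esy eirr econ edim edim2 l_gt0.
have noncomplete := not_complete edim edim2.
split=> [D|]; last exact: listed_dist_number l_gt0 (card_gt3 edim edim2) noncomplete.
have [[A [eA A0 CA0]]|[A [eA CA2]]|[A [c [cA eA B2]]]] :=
  graph_shapes esy eirr noncomplete (triple_twins_off edim edim2)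
    (diameter2 esy eirr econ edim edim2).
- exact: cbip_listed eA A0 CA0 D.
- exact: csplit_listed eA CA2 D.
- exact: csplit1_listed cA eA B2 D.
Qed.
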